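(* Let $h$ be a probability density on $\mathbb R$ satisfying (H1) $h$ is symmetric, positive and decreasing on $[0,\infty)$, and (H2) $\log(1/h(x))\le c_1(1+\log^{1+\kappa}(1+x))$ for all $x\ge0$, for some constants $c_1>0$, $\kappa\ge0$. For $\sigma>0$ let $\pi$ be the law of $\sigma\zeta$ where $\zeta$ has density $h$; let $\theta\sim\pi$ and $X\mid\theta\sim\mathcal N(\theta,1/n)$. Then there is a constant $C>0$ (depending only on $h$) such that for all $n\ge1$, $t\in\mathbb R$, $\theta_0\in\mathbb R$ and $\sigma>0$, $$E_{\theta_0}E^\pi\big[e^{t\sqrt n(\theta-X)}\,\big|\,X\big]\le C\,\sigma\sqrt n\, e^{t^2/2}\exp\Big\{c_1\log^{1+\kappa}\Big(1+\frac{|\theta_0|+1/\sqrt n}{\sigma}\Big)\Big\}.$$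
   Context: $E^\pi[\cdot\mid X]$ denotes expectation under the posterior distribution of $\theta$ given $X$ for prior $\pi$; $E_{\theta_0}$ denotes expectation over $X\sim\mathcal N(\theta_0,1/n)$. *)

From HB Require Import structures.
From mathcomp Require Import all_boot all_order all_algebra.
From mathcomp Require Import all_classical all_reals all_analysis.
Set Implicit Arguments. Unset Strict Implicit. Unset Printing Implicit Defensive.
Import Order.TTheory GRing.Theory Num.Theory.
Local Open Scope ring_scope.
Local Open Scope classical_set_scope.

Section Defs.
Variable R : realType.

Definition is_prob_density (h : R -> R) : Prop :=
  measurable_fun setT h /\ (forall x, 0 <= h x) /\
  (\int[lebesgue_measure]_x (h x)%:E = 1)%E.

Definition H1 (h : R -> R) : Prop :=
  (forall x, h (- x) = h x) /\ (forall x, 0 < h x) /\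
  (forall x y, 0 <= x -> x <= y -> h y <= h x).

Definition H2 (h : R -> R) (c1 kappa : R) : Prop :=
  forall x, 0 <= x -> ln ((h x)^-1) <= c1 * (1 + ln (1 + x) `^ (1 + kappa)).

(* prior density of sigma * zeta, zeta ~ h *)
Definition prior_dens (h : R -> R) (sigma : R) (th : R) : R := (h (th / sigma)) / sigma.

(* likelihood of X = x given theta: N(theta, 1/n) density *)
Definition lik (n : nat) (th x : R) : R := normal_pdf th (Num.sqrt (n%:R))^-1 x.

Definition post_exp (h : R -> R) (sigma : R) (n : nat) (f : R -> R -> R) (x : R) : \bar R :=
  ((\int[lebesgue_measure]_th (f x th * lik n th x * prior_dens h sigma th)%:E) *
   (\int[lebesgue_measure]_th (lik n th x * prior_dens h sigma th)%:E)^-1)%E.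

Definition freq_exp (n : nat) (th0 : R) (g : R -> \bar R) : \bar R :=
  (\int[lebesgue_measure]_x ((lik n th0 x)%:E * g x))%E.

End Defs.

From HB Require Import structures.
From mathcomp Require Import all_boot all_order all_algebra.
From mathcomp Require Import all_classical all_reals all_analysis.
From mathcomp Require Import measurable_realfun lebesgue_integral_fubini normal_distribution.
From mathcomp.algebra_tactics Require Import ring lra.
Import Order.TTheory GRing.Theory Num.Theory.
Local Open Scope ring_scope.
Local Open Scope classical_set_scope.

(* Write [L x th] for the N(th, 1/n) density at [x] and [D x] for the marginal
   likelihood of [x].  On the interval of length 1/sqrt n next to th0 on the
   side of x, [L x th >= exp(-1/2) L x th0], and, h being symmetric and
   decreasing, the prior density is at least h a / sigma with
   a = (|th0| + 1/sqrt n) / sigma.  Hence [L x th0 / D x <= exp(1/2) sigma sqrt n / h a],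
   so the left-hand side is at most that constant times the integral over
   (x, th) of exp(t sqrt n (th - x)) L x th pi(th), which equals exp(t^2/2) by
   Tonelli and completing the square.  Finally (H2) bounds 1 / h a. *)

Section integral_change_of_scale.
Context {R : realType}.
Local Notation mu := (@lebesgue_measure R).

(* No measurability is needed: the integral of a nonnegative function is the
   supremum of the integrals of the simple functions below it. *)
Lemma ge0_le_integral_any (f g : R -> \bar R) : (forall x, 0 <= f x)%E ->
  (forall x, f x <= g x)%E -> (\int[mu]_x f x <= \int[mu]_x g x)%E.
Proof.
move=> f0 fg; have g0 x : (0 <= g x)%E by exact: le_trans (f0 x) (fg x).
rewrite !ge0_integralTE //; apply: ereal_sup_le => _ [k kf <-].
by exists k => //= x; exact: le_trans (kf x) (fg x).
Qed.

Lemma pushforward_divr (s : R) (A : set R) : 0 < s -> measurable A ->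
  pushforward mu (fun x : R => x / s) A = (s%:E * mu A)%E.
Proof.
move=> s0 mA; have si : 0 <= s^-1 by rewrite invr_ge0 ltW.
have ms : measurable_fun setT (fun x : R => x / s) by exact: measurable_funM.
have /(_ ms _ A mA) -> := @lebesgue_measure_unique R (mscale (NngNum si)
  (pushforward mu ((fun x : R => x / s) : _ -> measurableTypeR R) : {measure set _ -> \bar R})).
  by rewrite /=; unfold mscale; rewrite /= /pushforward muleA -EFinM divff ?gt_eqF // mul1e.
move=> _ [[a b] _ <-]; rewrite /=; unfold mscale; rewrite /= /pushforward.
have -> : (fun x : R => x / s) @^-1` `]a, b] = `]a * s, b * s].
  by apply/seteqP; split => x /=; rewrite !in_itv/= ltr_pdivlMr // ler_pdivrMr.
rewrite !lebesgue_measure_itv/= !lte_fin ltr_pM2r //.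
case: ifP => _; last by rewrite mule0.
by rewrite -!EFinD -EFinM -mulrBl mulrC mulfK ?gt_eqF.
Qed.

Lemma ge0_integral_divr (s : R) (f : R -> R) : 0 < s ->
  measurable_fun setT f -> (forall x, 0 <= f x) ->
  (\int[mu]_x (f (x / s))%:E = s%:E * \int[mu]_x (f x)%:E)%E.
Proof.
move=> s0 mf f0; have ms : measurable_fun setT (fun x : R => x / s).
  exact: measurable_funM.
have := @ge0_integral_pushforward _ _ (measurableTypeR R) (measurableTypeR R) R
  _ ms mu setT (EFin \o f) measurableT.
rewrite preimage_setT => <- //=; last 2 first.
- exact/measurable_EFinP.
- by move=> y _; rewrite lee_fin.
rewrite (@eq_measure_integral _ _ _ setT (mscale (NngNum (ltW s0)) mu)).
  by rewrite ge0_integral_mscale //; [exact/measurable_EFinP | move=> x _; rewrite lee_fin].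
by move=> B mB _; exact: pushforward_divr.
Qed.

End integral_change_of_scale.

Section prior.
Context {R : realType}.
Local Notation mu := (@lebesgue_measure R).
Variables (h : R -> R) (sg : R).
Hypothesis sg_gt0 : 0 < sg.

Lemma prior_dens_ge0 : (forall x, 0 <= h x) -> forall th, 0 <= prior_dens h sg th.
Proof. by move=> h0 th; rewrite divr_ge0 // ltW. Qed.

Lemma measurable_prior_dens : measurable_fun setT h ->
  measurable_fun setT (prior_dens h sg).
Proof.
move=> mh; have -> : prior_dens h sg = (h \o ( *%R^~ sg^-1)) \* cst sg^-1 by [].
by apply: measurable_funM => //; apply: measurableT_comp => //; exact: measurable_funM.
Qed.

Lemma integral_prior_dens : is_prob_density h ->
  (\int[mu]_th (prior_dens h sg th)%:E = 1)%E.
Proof.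
move=> [mh [h0 h1]].
under eq_integral do rewrite /prior_dens mulrC EFinM.
rewrite ge0_integralZl //=; last 3 first.
- by apply/measurable_EFinP; apply: measurableT_comp => //; exact: measurable_funM.
- by move=> x _; rewrite lee_fin.
- by rewrite lee_fin invr_ge0 ltW.
by rewrite ge0_integral_divr // h1 mule1 -EFinM mulVf ?gt_eqF.
Qed.

End prior.

Lemma H1_le_norm {R : realType} (h : R -> R) (y b : R) : H1 h ->
  `|y| <= b -> h b <= h y.
Proof.
move=> [hN [_ hdec]] yb.
have -> : h y = h `|y| by case: (ler0P y) => // _; rewrite hN.
exact: hdec.
Qed.

Lemma H2_invr_le {R : realType} {h : R -> R} {c1 kappa a : R} :
  H2 h c1 kappa -> 0 < h a -> 0 <= a ->
  (h a)^-1 <= expR c1 * expR (c1 * ln (1 + a) `^ (1 + kappa)).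
Proof.
move=> H2h ha a0; rewrite -[(h a)^-1]lnK ?posrE ?invr_gt0 //.
by rewrite -expRD ler_expR -[c1 in c1 + _]mulr1 -mulrDr; exact: H2h.
Qed.

Section normal_pdf_bounds.
Context {R : realType}.
Variable s : R.
Hypothesis s_neq0 : s != 0.

Lemma normal_pdf_gt0 (m x : R) : 0 < normal_pdf m s x.
Proof. by rewrite normal_pdfE // mulr_gt0 ?expR_gt0 ?normal_peak_gt0. Qed.

(* Completing the square in the exponent. *)
Lemma expR_mul_normal_pdf (t m x : R) :
  expR (t / s * (m - x)) * normal_pdf m s x =
  expR (t ^+ 2 / 2) * normal_pdf (m - t * s) s x.
Proof.
rewrite !normal_pdfE // /normal_fun mulrCA [RHS]mulrCA -!expRD.
by congr (_ * expR _); field.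
Qed.

Lemma normal_pdf_mean_shift_ge (m0 m x : R) :
  (x - m) ^+ 2 <= (x - m0) ^+ 2 + s ^+ 2 ->
  expR (- (1 / 2)) * normal_pdf m0 s x <= normal_pdf m s x.
Proof.
move=> le_sqr; rewrite !normal_pdfE // mulrCA ler_wpM2l ?normal_peak_ge0 //.
rewrite /normal_fun -expRD ler_expR -subr_ge0.
have -> : - (x - m) ^+ 2 / (s ^+ 2 *+ 2) - (- (1 / 2) + - (x - m0) ^+ 2 / (s ^+ 2 *+ 2))
   = ((x - m0) ^+ 2 + s ^+ 2 - (x - m) ^+ 2) / (s ^+ 2 *+ 2) by field.
by rewrite divr_ge0 ?subr_ge0 // mulrn_wge0 // sqr_ge0.
Qed.

End normal_pdf_bounds.

Lemma sqr_dist_le_shift {R : realFieldType} (x m0 m s : R) :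
  0 <= (x - m0) * (m - m0) -> `|m - m0| <= s ->
  (x - m) ^+ 2 <= (x - m0) ^+ 2 + s ^+ 2.
Proof.
move=> same_side near.
have : (m - m0) ^+ 2 <= s ^+ 2.
  by rewrite -real_normK ?num_real // lerXn2r ?nnegrE ?(le_trans _ near).
have -> : (x - m) ^+ 2 = (x - m0) ^+ 2 + (m - m0) ^+ 2 - 2 * ((x - m0) * (m - m0)) by ring.
lra.
Qed.

Definition tilted_joint {R : realType} (h : R -> R) (sg : R) (n : nat) (t : R)
    (z : R * R) : \bar R :=
  (expR (t * Num.sqrt n%:R * (z.2 - z.1)) * lik n z.2 z.1 * prior_dens h sg z.2)%:E.

Definition marginal_lik {R : realType} (h : R -> R) (sg : R) (n : nat) (x : R) : \bar R :=
  (\int[lebesgue_measure]_th (lik n th x * prior_dens h sg th)%:E)%E.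

Section posterior.
Context {R : realType} {h : R -> R} {sg : R} {n : nat}.
Local Notation mu := (@lebesgue_measure R).
Local Notation tilted_joint := (tilted_joint h sg n).
Local Notation marginal_lik := (marginal_lik h sg n).
Hypotheses (hdens : is_prob_density h) (sg_gt0 : 0 < sg) (n_gt0 : (0 < n)%N).

Let s : R := (Num.sqrt n%:R)^-1.

Let s_gt0 : 0 < s.
Proof. by rewrite invr_gt0 sqrtr_gt0 ltr0n. Qed.

Let h_ge0 : forall x, 0 <= h x.
Proof. by case: hdens => _ []. Qed.

Lemma tilted_joint_ge0 t z : (0 <= tilted_joint t z)%E.
Proof.
by rewrite lee_fin mulr_ge0 ?prior_dens_ge0 // mulr_ge0 ?expR_ge0 ?normal_pdf_ge0.
Qed.

Lemma measurable_tilted_joint t :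
  measurable_fun [set: (measurableTypeR R * measurableTypeR R)%type] (tilted_joint t).
Proof.
have [mh _] := hdens.
have lik_pair : (fun z : R * R => lik n z.2 z.1) =
    (fun z => normal_peak s * expR (- (z.1 - z.2) ^+ 2 / (s ^+ 2 *+ 2))).
  by apply/funext => z; rewrite /lik normal_pdfE ?gt_eqF.
apply/measurable_EFinP; apply: measurable_funM; [apply: measurable_funM|].
- apply: measurableT_comp => //; apply: measurable_funM => //.
  exact: measurable_funB.
- rewrite lik_pair; apply: measurable_funM => //; apply: measurableT_comp => //.
  apply: measurable_funM => //; apply: measurable_funN; apply: measurable_funX.
  exact: measurable_funB.
- by apply: measurableT_comp; [exact: measurable_prior_dens | exact: measurable_snd].
Qed.

Lemma measurable_integral_tilted_joint t :
  measurable_fun setT (fun x => \int[mu]_th tilted_joint t (x, th))%E.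
Proof.
exact: (@measurable_fun_fubini_tonelli_F _ _ _ _ R mu (tilted_joint t)
  (measurable_tilted_joint t) (@tilted_joint_ge0 t)).
Qed.

Lemma integral_tilted_joint t :
  (\int[mu]_x \int[mu]_th tilted_joint t (x, th) = (expR (t ^+ 2 / 2))%:E)%E.
Proof.
rewrite (fubini_tonelli _ (measurable_tilted_joint t) (@tilted_joint_ge0 t)) /=.
have [mh _] := hdens.
transitivity (\int[mu]_th ((expR (t ^+ 2 / 2))%:E * (prior_dens h sg th)%:E))%E.
  apply: eq_integral => th _.
  have shift x : expR (t * Num.sqrt n%:R * (th - x)) * lik n th x =
      expR (t ^+ 2 / 2) * normal_pdf (th - t * s) s x.
    by rewrite -expR_mul_normal_pdf ?gt_eqF // /s invrK.
  under eq_integral do rewrite /tilted_joint /= shift mulrAC EFinM.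
  rewrite ge0_integralZl //=.
  - by rewrite integral_normal_pdf mule1 EFinM.
  - by apply/measurable_EFinP; exact: measurable_normal_pdf.
  - by move=> x _; rewrite lee_fin normal_pdf_ge0.
  - by rewrite lee_fin mulr_ge0 ?expR_ge0 ?prior_dens_ge0.
rewrite ge0_integralZl //=.
- by rewrite integral_prior_dens // mule1.
- by apply/measurable_EFinP; exact: measurable_prior_dens.
- by move=> x _; rewrite lee_fin prior_dens_ge0.
Qed.

Lemma post_exp_ge0 (f : R -> R -> R) x : (forall x th, 0 <= f x th) ->
  (0 <= post_exp h sg n f x)%E.
Proof.
move=> f0; have lp_ge0 th : 0 <= lik n th x * prior_dens h sg th.
  by rewrite mulr_ge0 ?normal_pdf_ge0 ?prior_dens_ge0.
apply: mule_ge0; first by apply: integral_ge0 => th _; rewrite lee_fin -mulrA mulr_ge0.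
by rewrite inve_ge0; apply: integral_ge0 => th _; rewrite lee_fin.
Qed.

Lemma marginal_lik_ge (th0 x : R) : H1 h ->
  ((expR (- (1 / 2)) * lik n th0 x * (h ((`|th0| + s) / sg) / sg) * s)%:E
   <= marginal_lik x)%E.
Proof.
move=> hH; set c := expR (- (1 / 2)) * lik n th0 x * (h ((`|th0| + s) / sg) / sg).
pose l := if th0 <= x then th0 else th0 - s.
have near_th0 th : l <= th <= l + s ->
    0 <= (x - th0) * (th - th0) /\ `|th - th0| <= s.
  rewrite /l; have [x_ge | x_lt] := leP th0 x => /andP[lth thl]; split.
  - by rewrite mulr_ge0 ?subr_ge0.
  - by rewrite ger0_norm ?subr_ge0 // lerBlDl.
  - by rewrite mulr_le0 // subr_le0; [exact: ltW | lra].
  - by rewrite ler_norml; apply/andP; split; lra.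
have c_le th : l <= th <= l + s -> c <= lik n th x * prior_dens h sg th.
  move=> /near_th0 [same_side dist_le]; apply: ler_pM.
  - by rewrite mulr_ge0 ?expR_ge0 ?normal_pdf_ge0.
  - by rewrite divr_ge0 ?(ltW sg_gt0).
  - by apply: normal_pdf_mean_shift_ge; rewrite ?gt_eqF //; exact: sqr_dist_le_shift.
  - rewrite ler_pM2r ?invr_gt0 //; apply: H1_le_norm => //.
    rewrite normrM [`|sg^-1|]gtr0_norm ?invr_gt0 // ler_pM2r ?invr_gt0 //.
    by rewrite -[th](subrK th0) (le_trans (ler_normD _ _)) // addrC lerD2l.
have c_ge0 : 0 <= c.
  by rewrite mulr_ge0 ?divr_ge0 ?(ltW sg_gt0) // mulr_ge0 ?expR_ge0 ?normal_pdf_ge0.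
pose J : set R := `[l, l + s]%classic.
have -> : ((c * s)%:E = \int[mu]_th ((cst (c%:E)) \_ J) th)%E.
  rewrite -integral_mkcond integral_cst /=; last exact: measurable_itv.
  rewrite /J lebesgue_measure_itv /= lte_fin ltrDl s_gt0.
  by rewrite -EFinD addrAC subrr add0r -EFinM.
apply: ge0_le_integral_any => th; rewrite /patch; case: ifPn => [/set_mem Jth | _].
- by rewrite lee_fin.
- by [].
- by rewrite lee_fin; apply: c_le; move: Jth; rewrite /J/= in_itv.
- by rewrite lee_fin mulr_ge0 ?normal_pdf_ge0 ?prior_dens_ge0.
Qed.

Lemma lik_mul_post_exp_le (t th0 x : R) : H1 h ->
  ((lik n th0 x)%:E * post_exp h sg n (fun x th => expR (t * Num.sqrt n%:R * (th - x))) x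
   <= (expR (1 / 2) * sg * Num.sqrt n%:R / h ((`|th0| + s) / sg))%:E *
      \int[mu]_th tilted_joint t (x, th))%E.
Proof.
move=> hH; have [_ [h_gt0 _]] := hH.
set a := (`|th0| + s) / sg; set L := lik n th0 x.
set K := expR (1 / 2) * sg * Num.sqrt n%:R / h a.
change (L%:E * (\int[mu]_th tilted_joint t (x, th) * (marginal_lik x)^-1)
  <= K%:E * \int[mu]_th tilted_joint t (x, th))%E.
have N_ge0 : (0 <= \int[mu]_th tilted_joint t (x, th))%E.
  by apply: integral_ge0 => th _; exact: tilted_joint_ge0.
set b := expR (- (1 / 2)) * L * (h a / sg) * s.
have b_gt0 : 0 < b.
  by rewrite /b /L /lik !mulr_gt0 ?expR_gt0 ?invr_gt0 ?normal_pdf_gt0 ?gt_eqF ?sqrtr_gt0 ?ltr0n.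
have D_ge : (b%:E <= marginal_lik x)%E := marginal_lik_ge th0 x hH.
have inv_le : ((marginal_lik x)^-1 <= (b^-1)%R%:E)%E.
  have -> : (b^-1)%:E = ((b%:E)^-1)%E by rewrite inver gt_eqF.
  have b_ge0 : (0 <= b%:E)%E by rewrite lee_fin ltW.
  by rewrite lee_pV2 // inE /= (le_trans b_ge0 D_ge).
have -> : K = L * b^-1.
  have sqrt_neq0 : Num.sqrt (n%:R : R) != 0 by rewrite gt_eqF ?sqrtr_gt0 ?ltr0n.
  rewrite /K /b expRN /s; field.
  by rewrite sqrt_neq0 !gt_eqF ?expR_gt0 ?h_gt0 // /L /lik normal_pdf_gt0 // invr_eq0.
rewrite muleCA [X in (_ <= X)%E]muleC lee_wpmul2l // EFinM lee_wpmul2l //.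
by rewrite lee_fin normal_pdf_ge0.
Qed.

End posterior.

Theorem mainTheorem4 (R : realType) (h : R -> R) (c1 kappa : R) :
  is_prob_density h -> H1 h -> 0 < c1 -> 0 <= kappa -> H2 h c1 kappa ->
  exists C : R, 0 < C /\
    forall (n : nat) (t th0 sigma : R), (1 <= n)%N -> 0 < sigma ->
      (freq_exp n th0
         (post_exp h sigma n (fun x th => expR (t * Num.sqrt n%:R * (th - x))))
       <= (C * sigma * Num.sqrt n%:R * expR (t ^+ 2 / 2) *
           expR (c1 * ln (1 + (`|th0| + (Num.sqrt n%:R)^-1) / sigma) `^ (1 + kappa)))%:E)%E.
Proof.
move=> hdens hH c1_gt0 kappa_ge0 H2h; have [_ [h_gt0 _]] := hH.
exists (expR (1 / 2) * expR c1); split; first by rewrite mulr_gt0 ?expR_gt0.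
move=> n t th0 sg n_gt0 sg_gt0.
set a := (`|th0| + (Num.sqrt n%:R)^-1) / sg.
set K := expR (1 / 2) * sg * Num.sqrt n%:R / h a.
apply: (@le_trans _ _ (\int[lebesgue_measure]_x
  (K%:E * \int[lebesgue_measure]_th tilted_joint h sg n t (x, th)))%E).
  apply: ge0_le_integral_any => x; last exact: lik_mul_post_exp_le.
  by rewrite mule_ge0 ?lee_fin ?normal_pdf_ge0 // post_exp_ge0 // => *; exact: expR_ge0.
have K_ge0 : (0 <= K%:E)%E.
  by rewrite lee_fin divr_ge0 ?mulr_ge0 ?expR_ge0 ?sqrtr_ge0 ?(ltW sg_gt0) ?(ltW (h_gt0 a)).
have mN := measurable_integral_tilted_joint hdens sg_gt0 n_gt0 t.
rewrite ge0_integralZl //; last by move=> x _; apply: integral_ge0 => *; exact: tilted_joint_ge0.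
rewrite integral_tilted_joint // -EFinM lee_fin.
have a_ge0 : 0 <= a by rewrite divr_ge0 ?addr_ge0 ?invr_ge0 ?sqrtr_ge0 ?(ltW sg_gt0).
have h_inv_le := H2_invr_le H2h (h_gt0 a) a_ge0.
set P := ln (1 + a) `^ (1 + kappa) in h_inv_le *.
set M := expR (1 / 2) * sg * Num.sqrt n%:R * expR (t ^+ 2 / 2).
have -> : K * expR (t ^+ 2 / 2) = M * (h a)^-1 by rewrite /K /M; ring.
have -> : expR (1 / 2) * expR c1 * sg * Num.sqrt n%:R * expR (t ^+ 2 / 2) * expR (c1 * P)
  = M * (expR c1 * expR (c1 * P)) by rewrite /M; ring.
by rewrite ler_wpM2l // /M !mulr_ge0 ?expR_ge0 ?sqrtr_ge0 ?(ltW sg_gt0).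
Qed.
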